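(* Let $T$ and $A$ be as in the context, and suppose $(ATA)^{-1}$ is Lipschitz continuous at zero. Let $\{(x_k,w_k)\}$ be an infinite sequence generated by the IPHA. Then $\{(x_k,w_k)\}$ converges linearly (to a solution of the SVI in extensive form) in the norm $\|(x,w)\|_{M_r}=\sqrt{\|x\|^2+r^{-2}\|w\|^2}$.
   Context: Multistage setting: $\Xi$ is a finite set of scenarios $\xi=(\xi_1,\dots,\xi_N)$ with probabilities $p(\xi)>0$; $n=n_1+\dots+n_N$. $\mathcal L_n$ is the space of functions $x:\Xi\to\mathbb R^n$, $x(\xi)=(x_1(\xi),\dots,x_N(\xi))$, $x_j(\xi)\in\mathbb R^{n_j}$, with inner product $\langle x,w\rangle=\sum_{\xi}p(\xi)\sum_{j}\langle x_j(\xi),w_j(\xi)\rangle$ and norm $\|\cdot\|$. $\mathcal N=\{x\in\mathcal L_n: x_j(\xi)\text{ does not depend on }\xi_j,\dots,\xi_N\}$, $\mathcal M=\mathcal N^\perp$, with orthogonal projections $P_{\mathcal N},P_{\mathcal M}$. For each $\xi$, $C(\xi)\subset\mathbb R^n$ is nonempty closed convex and $F(\cdot,\xi):\mathbb R^n\to\mathbb R^n$ is continuous monotone; $\mathcal C=\{x\in\mathcal L_n: x(\xi)\in C(\xi)\ \forall\xi\}$ and $\mathcal F(x)(\xi)=F(x(\xi),\xi)$. $r>0$ fixed. SVI in extensive form: find $x\in\mathcal N$, $w\in\mathcal M$ with $-F(x(\xi),\xi)-w(\xi)\in N_{C(\xi)}(x(\xi))$ for all $\xi$. $T:\mathcal L_n\rightrightarrows\mathcal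 L_n$ is defined by $z\in T(y)\iff P_{\mathcal N}(z)+P_{\mathcal M}(y)\in(\mathcal F+N_{\mathcal C})(P_{\mathcal N}(y)+P_{\mathcal M}(z))$, and $A(u)=P_{\mathcal N}(u)+rP_{\mathcal M}(u)$. A set-valued map $S$ with $S^{-1}=(ATA)^{-1}$ is Lipschitz continuous at zero if $S(0)=\{z^*\}$ is a singleton and there are $L,\eta>0$ with $\|z-z^*\|\le L\|v\|$ whenever $z\in S(v)$, $\|v\|\le\eta$. IPHA: choose $x_0\in\mathcal N$, $w_0\in\mathcal M$, $\bar\sigma\in(0,1)$, $\theta\in(0,1)$. At iteration $k$: choose $\sigma_k\in[0,\bar\sigma)$, find $\hat x^k,\hat w^k\in\mathcal L_n$ with $r(x_k(\xi)-\hat x^k(\xi))-w_k(\xi)\in F(\hat w^k(\xi),\xi)+N_{C(\xi)}(\hat w^k(\xi))$ for all $\xi$, $\delta^k=\hat w^k-\hat x^k$, and $\|\delta^k\|^2\le\sigma_k^2(\|a_k\|^2+\|b_k\|^2)$, where $a_k=x_k-P_{\mathcal N}(\hat x^k)+P_{\mathcal M}(\hat w^k)$, $b_k=x_k-P_{\mathcal N}(\hat w^k)+P_{\mathcal M}(\hat x^k)$. If $b_k=0$ stop; otherwise choose $\tau_k\in[1-\theta,1+\theta]$, set $\alpha_k=\langle a_k,b_k\rangle/\|a_k\|^2$, $x_{k+1}=x_k-\tau_k\alpha_k(x_k-P_{\mathcal N}(\hat x^k))$, $w_{k+1}=w_k+\tau_k\alpha_k rP_{\mathcal M}(\hat w^k)$.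 *)

From HB Require Import structures.
From mathcomp Require Import all_boot all_order all_algebra.
From mathcomp Require Import all_classical all_reals all_analysis.
Set Implicit Arguments. Unset Strict Implicit. Unset Printing Implicit Defensive.
Import Order.TTheory GRing.Theory Num.Theory.
Import numFieldNormedType.Exports.
Local Open Scope ring_scope.
Local Open Scope classical_set_scope.

Section Defs.
Context {R : realType}.

Definition dotv {n : nat} (u v : 'rV[R]_n) : R := \sum_(i < n) u ord0 i * v ord0 i.

Definition normal_cone {V : zmodType} (ip : V -> V -> R) (C : set V) (u : V) : set V :=
  [set v | C u /\ forall y, C y -> ip v (y - u) <= 0].

Definition is_convex {n : nat} (C : set 'rV[R]_n) : Prop :=
  forall a b t, C a -> C b -> 0 <= t -> t <= 1 -> C (t *: a + (1 - t) *: b).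

Definition monotone_map {n : nat} (G : 'rV[R]_n -> 'rV[R]_n) : Prop :=
  forall u v, 0 <= dotv (G u - G v) (u - v).

(* Scenario data: finite scenario type S with probabilities p; sc s k = xi_k
   (stage k, 0-indexed) of scenario s; coordinate i of R^n belongs to stage
   [stage i]. *)
Context {S : finType} {n N : nat} (p : S -> R) {Om : eqType}
  (sc : S -> 'I_N -> Om) (stage : 'I_n -> 'I_N).

Definition Ln := {ffun S -> 'rV[R]_n}.

Definition ipL (x y : Ln) : R := \sum_s p s * dotv (x s) (y s).
Definition normL (x : Ln) : R := Num.sqrt (ipL x x).

(* Nonanticipativity: the stage-j block x_j(xi) depends only on
   xi_1, ..., xi_{j-1} (0-indexed: on xi_k for k < j). *)
Definition Nsp : set Ln :=
  [set x : Ln | forall (s s' : S) (i : 'I_n),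
     (forall k : 'I_N, (k < stage i)%N -> sc s k = sc s' k) ->
     x s ord0 i = x s' ord0 i].

Definition Msp : set Ln := [set w : Ln | forall x, Nsp x -> ipL w x = 0].

Definition oproj (V : set Ln) (x : Ln) : Ln :=
  xget 0 [set y | V y /\ forall z, V z -> ipL (x - y) z = 0].

Definition PN := oproj Nsp.
Definition PM := oproj Msp.

Definition Ccal (C : S -> set 'rV[R]_n) : set Ln := [set x | forall s, C s (x s)].
Definition Fcal (F : S -> 'rV[R]_n -> 'rV[R]_n) (x : Ln) : Ln := [ffun s => F s (x s)].

Definition Trel F C (y z : Ln) : Prop :=
  let u := PN y + PM z in
  normal_cone ipL (Ccal C) u (PN z + PM y - Fcal F u).

Definition Aop (r : R) (u : Ln) : Ln := PN u + r *: PM u.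

Definition ATA F C r (y v : Ln) : Prop :=
  exists z, Trel F C (Aop r y) z /\ v = Aop r z.

Definition ATAinv F C r (v : Ln) : set Ln := [set y | ATA F C r y v].

Definition lipschitz_at_zero (Sm : Ln -> set Ln) : Prop :=
  exists zs : Ln, (forall z, Sm 0 z <-> z = zs) /\
  exists L eta : R, 0 < L /\ 0 < eta /\
    forall v z, Sm v z -> normL v <= eta -> normL (z - zs) <= L * normL v.

Definition normMr (r : R) (x w : Ln) : R :=
  Num.sqrt (normL x ^+ 2 + r ^-2 * normL w ^+ 2).

Definition SVI_solution F C (x w : Ln) : Prop :=
  Nsp x /\ Msp w /\
  forall s, normal_cone dotv (C s) (x s) (- F s (x s) - w s).

(* An infinite sequence generated by IPHA (never stops: b_k <> 0). *)
Definition IPHA_run F C (r sigbar theta : R) (sigma tau : nat -> R)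
  (x w xh wh : nat -> Ln) : Prop :=
  Nsp (x 0%N) /\ Msp (w 0%N) /\ 0 < sigbar < 1 /\ 0 < theta < 1 /\
  forall k : nat,
    let a := x k - PN (xh k) + PM (wh k) in
    let b := x k - PN (wh k) + PM (xh k) in
    let delta := wh k - xh k in
    let alpha := ipL a b / normL a ^+ 2 in
    (0 <= sigma k < sigbar) /\
        (forall s, normal_cone dotv (C s) (wh k s)
                     (r *: (x k s - xh k s) - w k s - F s (wh k s))) /\
        normL delta ^+ 2 <= sigma k ^+ 2 * (normL a ^+ 2 + normL b ^+ 2) /\
        b != 0 /\
        (1 - theta <= tau k <= 1 + theta) /\
        x k.+1 = x k - (tau k * alpha) *: (x k - PN (xh k)) /\
        w k.+1 = w k + (tau k * alpha * r) *: PM (wh k).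

End Defs.

(* Write [A = P_N + r P_M].  One IPHA iteration produces a point [(y_k, r a_k)] of the
   graph of the monotone operator [ATA], where [y_k = x_k - r^-1 w_k - b_k], and a zero
   [zs] of [ATA] gives the solution [(P_N zs, - r P_M zs)] of the SVI.  The M_r-distance
   from [(x_k, w_k)] to this solution is the norm of [e_k = x_k - r^-1 w_k - zs], and
   monotonicity of [ATA] between [(y_k, r a_k)] and [(zs, 0)] makes the update a relaxed
   projection of [x_k - r^-1 w_k] onto a half-space containing [zs]; with the inexactness
   bound this gives [|e_(k+1)|^2 <= |e_k|^2 - rho (|a_k|^2 + |b_k|^2)].  Lipschitz
   continuity of [(ATA)^-1] at zero bounds [|e_k|^2] by a multiple of [|a_k|^2 + |b_k|^2],
   which turns the descent into a contraction. *)

From HB Require Import structures.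
From mathcomp Require Import all_boot all_order all_algebra.
From mathcomp Require Import all_classical all_reals all_analysis.
From mathcomp Require Import ring lra.
Set Implicit Arguments. Unset Strict Implicit. Unset Printing Implicit Defensive.
Import Order.TTheory GRing.Theory Num.Theory.
Import numFieldNormedType.Exports.
Local Open Scope ring_scope.
Local Open Scope classical_set_scope.

Ltac ffun_row_ring := apply/ffunP => ?; apply/rowP => ?; rewrite !ffunE !mxE; ring.

Section DotProduct.
Context {R : realType} {n : nat}.
Implicit Types u v w : 'rV[R]_n.

Lemma dotvC u v : dotv u v = dotv v u.
Proof. by apply: eq_bigr => i _; rewrite mulrC. Qed.

Lemma dotvDl u v w : dotv (u + v) w = dotv u w + dotv v w.
Proof. by rewrite /dotv -big_split; apply: eq_bigr => i _; rewrite !mxE mulrDl. Qed.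

Lemma dotvZl a u v : dotv (a *: u) v = a * dotv u v.
Proof. by rewrite /dotv mulr_sumr; apply: eq_bigr => i _; rewrite !mxE mulrA. Qed.

Lemma dotv0r u : dotv u 0 = 0.
Proof. by rewrite /dotv big1 // => i _; rewrite mxE mulr0. Qed.

Lemma dotv_ge0 u : 0 <= dotv u u.
Proof. by apply: sumr_ge0 => i _; rewrite -expr2 sqr_ge0. Qed.

Lemma dotv_eq0 u : dotv u u = 0 -> u = 0.
Proof.
move=> u0; apply/rowP => i; rewrite mxE.
have sq_ge0 j : 0 <= u ord0 j * u ord0 j by rewrite -expr2 sqr_ge0.
have /eqP := psumr_eq0P (fun j _ => sq_ge0 j) u0 (i := i) isT.
by rewrite mulf_eq0 orbb => /eqP.
Qed.

End DotProduct.

Section RealInequalities.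
Context {R : realFieldType}.

Definition descent_rate (theta sigbar : R) : R :=
  (1 - theta ^+ 2) * (1 - sigbar ^+ 2) ^+ 2 / 4.

Lemma descent_rate_gt0 th sb : 0 < th < 1 -> 0 < sb < 1 -> 0 < descent_rate th sb.
Proof.
move=> /andP [th0 th1] /andP [sb0 sb1].
by rewrite /descent_rate !(mulr_gt0, divr_gt0, exprn_gt0) //; nra.
Qed.

Lemma descent_rate_lt1 th sb : 0 < th < 1 -> 0 < sb < 1 -> descent_rate th sb < 1.
Proof.
move=> /andP [th0 th1] /andP [sb0 sb1].
have th2 : 0 <= 1 - th ^+ 2 <= 1 by apply/andP; split; nra.
have sb2 : 0 <= (1 - sb ^+ 2) ^+ 2 <= 1 by apply/andP; split; [apply: sqr_ge0 | rewrite expr_le1 //; nra].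
rewrite /descent_rate ltr_pdivrMr // mul1r; nra.
Qed.

Lemma relaxation_gain (Qa Qb ab sig sb th tau : R) :
  0 < Qa -> 0 <= Qb -> Qa + Qb - 2 * ab <= sig ^+ 2 * (Qa + Qb) ->
  0 <= sig < sb -> sb < 1 -> 0 < th < 1 -> 1 - th <= tau <= 1 + th ->
  0 <= ab /\ descent_rate th sb * (Qa + Qb) * Qa <= tau * (2 - tau) * ab ^+ 2.
Proof.
move=> Qa0 Qb0 inexact /andP [sig0 sig_sb] sb1 /andP [th0 th1] /andP [tau_lo tau_hi].
have sb2 : 0 < 1 - sb ^+ 2 by nra.
have gap : (1 - sb ^+ 2) * (Qa + Qb) <= 2 * ab.
  have : sig ^+ 2 * (Qa + Qb) <= sb ^+ 2 * (Qa + Qb) by apply: ler_wpM2r; nra.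
  lra.
have ab0 : 0 <= ab by nra.
split=> //.
have gap2 : ((1 - sb ^+ 2) * (Qa + Qb)) ^+ 2 <= (2 * ab) ^+ 2.
  by rewrite ler_sqr ?nnegrE; nra.
have tau_gain : 1 - th ^+ 2 <= tau * (2 - tau) by nra.
have QaQ : (1 - sb ^+ 2) ^+ 2 * (Qa + Qb) * Qa <= 4 * ab ^+ 2 by nra.
have th2 : 0 <= 1 - th ^+ 2 by nra.
have X0 : 0 <= (1 - sb ^+ 2) ^+ 2 * (Qa + Qb) * Qa.
  by apply: mulr_ge0; [apply: mulr_ge0; [exact: sqr_ge0 | lra] | lra].
have := ler_pM th2 X0 tau_gain QaQ; rewrite /descent_rate.
have -> : (1 - th ^+ 2) * (1 - sb ^+ 2) ^+ 2 / 4 * (Qa + Qb) * Qa =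
    (1 - th ^+ 2) * ((1 - sb ^+ 2) ^+ 2 * (Qa + Qb) * Qa) / 4 by ring.
rewrite ler_pdivrMr //; nra.
Qed.

End RealInequalities.

Section LinearRate.
Context {R : realType}.

Lemma linear_rate_of_descent (E D : nat -> R) (rho K : R) :
  0 < rho < K -> (forall k, 0 <= E k) ->
  (forall k, E k.+1 <= E k - rho * D k) -> (forall k, E k <= K * D k) ->
  (fun k => Num.sqrt (E k)) @ \oo --> 0 /\
  exists c, 0 < c < 1 /\ forall k, Num.sqrt (E k.+1) <= c * Num.sqrt (E k).
Proof.
move=> /andP [rho0 rhoK] E0 descent bound.
have K0 : 0 < K by apply: lt_trans rhoK.
have q01 : 0 < 1 - rho / K < 1.
  by rewrite subr_gt0 ltr_pdivrMr // mul1r rhoK ltrBlDr ltrDl divr_gt0.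
have contraction k : E k.+1 <= (1 - rho / K) * E k.
  have : E k / K <= D k by rewrite ler_pdivrMr // mulrC.
  move=> /(ler_wpM2l (ltW rho0)); rewrite mulrA mulrAC.
  by have := descent k; lra.
set c := Num.sqrt (1 - rho / K).
have c01 : 0 < c < 1.
  by case/andP: q01 => q0 q1; rewrite sqrtr_gt0 q0 /= -sqrtr1 ltr_sqrt.
have rate k : Num.sqrt (E k.+1) <= c * Num.sqrt (E k).
  rewrite -sqrtrM; last by case/andP: q01 => q0 _; apply: ltW.
  exact: ler_wsqrtr.
split; last by exists c.
have geometric_bound k : Num.sqrt (E k) <= geometric (Num.sqrt (E 0%N)) c k.
  elim: k => [|k IHk] /=; first by rewrite expr0 mulr1.
  apply: le_trans (rate k) _; rewrite exprS mulrCA ler_wpM2l //.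
  by case/andP: c01 => c0 _; apply: ltW.
case/andP: c01 => c0 c1.
apply: (squeeze_cvgr _ (cvg_cst 0) (cvg_geometric _ (_ : `|c| < 1))).
  by apply: nearW => k; rewrite sqrtr_ge0; apply: geometric_bound.
by rewrite ger0_norm // ltW.
Qed.

End LinearRate.

Section InnerProduct.
Context {R : realType} {S : finType} {n : nat} {p : S -> R}.
Hypothesis p_gt0 : forall s, 0 < p s.
Local Notation Ln := (@Ln R S n).
Local Notation ip := (ipL p).
Implicit Types x y z : Ln.

Lemma ipLC x y : ip x y = ip y x.
Proof. by apply: eq_bigr => s _; rewrite dotvC. Qed.

Lemma ipLDl x y z : ip (x + y) z = ip x z + ip y z.
Proof. by rewrite /ipL -big_split; apply: eq_bigr => s _; rewrite ffunE dotvDl mulrDr. Qed.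

Lemma ipLZl a x y : ip (a *: x) y = a * ip x y.
Proof. by rewrite /ipL mulr_sumr; apply: eq_bigr => s _; rewrite ffunE dotvZl mulrCA. Qed.

Lemma ipLNl x y : ip (- x) y = - ip x y.
Proof. by rewrite -scaleN1r ipLZl mulN1r. Qed.

Lemma ipLBl x y z : ip (x - y) z = ip x z - ip y z.
Proof. by rewrite ipLDl ipLNl. Qed.

Lemma ipL0l x : ip 0 x = 0.
Proof. by rewrite -(scale0r 0) ipLZl mul0r. Qed.

Lemma ipLDr x y z : ip z (x + y) = ip z x + ip z y.
Proof. by rewrite ipLC ipLDl !(ipLC z). Qed.

Lemma ipLZr a x y : ip y (a *: x) = a * ip y x.
Proof. by rewrite ipLC ipLZl ipLC. Qed.

Lemma ipLNr x y : ip y (- x) = - ip y x.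
Proof. by rewrite ipLC ipLNl ipLC. Qed.

Lemma ipLBr x y z : ip z (x - y) = ip z x - ip z y.
Proof. by rewrite ipLC ipLBl !(ipLC z). Qed.

Lemma ipL_ge0 x : 0 <= ip x x.
Proof. by apply: sumr_ge0 => s _; rewrite mulr_ge0 ?dotv_ge0 ?ltW. Qed.

Lemma ipL_eq0 x : ip x x = 0 -> x = 0.
Proof.
move=> x0; apply/ffunP => s; rewrite ffunE.
have term_ge0 t : 0 <= p t * dotv (x t) (x t) by rewrite mulr_ge0 ?dotv_ge0 ?ltW.
have /eqP := psumr_eq0P (fun t _ => term_ge0 t) x0 (i := s) isT.
by rewrite mulf_eq0 (gt_eqF (p_gt0 s)) => /eqP /dotv_eq0.
Qed.

Lemma ipL_gt0 x : x != 0 -> 0 < ip x x.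
Proof. by move=> x0; rewrite lt0r ipL_ge0 andbT; apply: contra_neq x0 => /ipL_eq0. Qed.

Lemma normL_sqr x : normL p x ^+ 2 = ip x x.
Proof. exact/sqr_sqrtr/ipL_ge0. Qed.

Lemma ipL_sqr_le x y : ip (x + y) (x + y) <= 2 * ip x x + 2 * ip y y.
Proof.
have := ipL_ge0 (x - y).
rewrite !ipLBl !ipLDl !ipLBr !ipLDr (ipLC y x); lra.
Qed.

Lemma oproj_eq (V : set Ln) x y :
  (forall u v, V u -> V v -> V (u - v)) ->
  V y -> (forall z, V z -> ip (x - y) z = 0) -> oproj p V x = y.
Proof.
move=> V_sub Vy y_orth; apply: xget_unique => // y' [Vy' y'_orth].
have Vd := V_sub _ _ Vy' Vy.
have d_def : y' - y = (x - y) - (x - y') by rewrite opprB [RHS]addrC addrA subrK.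
apply/subr0_eq/ipL_eq0; rewrite {1}d_def ipLBl y_orth // y'_orth //.
exact: subrr.
Qed.

(* If [e] is the error of a point [q], then [ip a b <= ip a e] says that the solution
   lies in the half-space [{z | ip a (z - (q - b)) <= 0}]; the conclusion is about the
   error after the relaxed projection of [q] onto it. *)
Lemma relaxed_step_descent (a b e : Ln) (sig sb th tau : R) :
  b != 0 -> ip a b <= ip a e ->
  ip (a - b) (a - b) <= sig ^+ 2 * (ip a a + ip b b) ->
  0 <= sig < sb -> sb < 1 -> 0 < th < 1 -> 1 - th <= tau <= 1 + th ->
  ip (e - (tau * (ip a b / normL p a ^+ 2)) *: a) (e - (tau * (ip a b / normL p a ^+ 2)) *: a)
    <= ip e e - descent_rate th sb * (ip a a + ip b b).
Proof.
move=> b0 ab_le inexact sig01 sb1 th01 tau01.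
have expand_ab : ip (a - b) (a - b) = ip a a + ip b b - 2 * ip a b.
  by rewrite !ipLBl !ipLBr (ipLC b a); ring.
rewrite expand_ab in inexact.
have Qb0 := ipL_gt0 b0.
have Qa0 : 0 < ip a a.
  rewrite lt0r ipL_ge0 andbT; apply/eqP => Qa0.
  have sig2 : sig ^+ 2 < 1 by case/andP: sig01 => *; nra.
  move: inexact; rewrite Qa0 (ipL_eq0 Qa0) ipL0l; nra.
have [ab0 gain] := relaxation_gain Qa0 (ltW Qb0) inexact sig01 sb1 th01 tau01.
rewrite normL_sqr; set t := tau * (ip a b / ip a a).
have tau0 : 0 <= tau by case/andP: tau01 => lo _; case/andP: th01 => _ th1; lra.
have t0 : 0 <= t by rewrite /t mulr_ge0 // divr_ge0 // ltW.
have tQa : t * ip a a = tau * ip a b by rewrite -mulrA mulfVK // gt_eqF.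
have step_gain : descent_rate th sb * (ip a a + ip b b) <= t * ip a b * (2 - tau).
  have -> : t * ip a b * (2 - tau) = tau * (2 - tau) * ip a b ^+ 2 / ip a a.
    by rewrite /t; field; rewrite gt_eqF.
  by rewrite ler_pdivlMr.
have := ler_wpM2l t0 ab_le.
rewrite ipLBl !ipLBr !ipLZl !ipLZr (ipLC e a) tQa.
nra.
Qed.

Lemma local_error_bound (a b e : Ln) (r L eta E0 : R) :
  0 < eta -> ip e e <= E0 ->
  (normL p (r *: a) <= eta -> normL p (e - b) <= L * normL p (r *: a)) ->
  ip e e <= (2 * L ^+ 2 * r ^+ 2 + 2 + r ^+ 2 * E0 / eta ^+ 2) * (ip a a + ip b b).
Proof.
move=> eta0 eE0 lip.
have Qa := ipL_ge0 a; have Qb := ipL_ge0 b; have E00 := le_trans (ipL_ge0 e) eE0.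
have ra : normL p (r *: a) ^+ 2 = r ^+ 2 * ip a a.
  by rewrite normL_sqr ipLZl ipLZr mulrA -expr2.
have c1 : 0 <= 2 * L ^+ 2 * r ^+ 2.
  by apply: mulr_ge0; [apply: mulr_ge0 => //; apply: sqr_ge0 | apply: sqr_ge0].
have c2 : 0 <= r ^+ 2 * E0 / eta ^+ 2.
  by apply: divr_ge0; [apply: mulr_ge0 => //; apply: sqr_ge0 | apply: sqr_ge0].
have := mulr_ge0 c1 Qb; have := mulr_ge0 c2 Qa; have := mulr_ge0 c2 Qb.
case: (lerP (normL p (r *: a)) eta) => [near | far].
  have de : ip (e - b) (e - b) <= L ^+ 2 * (r ^+ 2 * ip a a).
    have de := lip near; have de0 : 0 <= normL p (e - b) by apply: sqrtr_ge0.
    by rewrite -normL_sqr -ra -exprMn ler_sqr ?nnegrE //; apply: le_trans de.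
  have := ipL_sqr_le (e - b) b; rewrite subrK; nra.
have far2 : eta ^+ 2 < r ^+ 2 * ip a a.
  by rewrite -ra ltr_pXn2r ?nnegrE ?(ltW eta0) //; apply: sqrtr_ge0.
have : E0 <= r ^+ 2 * E0 / eta ^+ 2 * ip a a.
  by rewrite mulrAC ler_pdivlMr ?exprn_gt0 //; nra.
nra.
Qed.

End InnerProduct.

Section ExtensiveForm.
Variables (R : realType) (S : finType) (n N : nat) (Om : eqType).
Variables (p : S -> R) (sc : S -> 'I_N -> Om) (stage : 'I_n -> 'I_N).
Hypothesis p_gt0 : forall s, 0 < p s.
Local Notation Ln := (@Ln R S n).
Local Notation ip := (ipL p).
Local Notation Nsp := (@Nsp R S n N Om sc stage).
Local Notation Msp := (Msp p sc stage).
Implicit Types x y z u v : Ln.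

Definition same_history (i : 'I_n) (s t : S) : bool :=
  [forall k : 'I_N, (k < stage i)%N ==> (sc s k == sc t k)].

Lemma same_historyP i s t :
  reflect (forall k : 'I_N, (k < stage i)%N -> sc s k = sc t k) (same_history i s t).
Proof.
apply: (iffP forallP) => [H k lt_k | H k]; first exact/eqP/(implyP (H k)).
by apply/implyP => /H ->.
Qed.

Lemma same_history_refl i s : same_history i s s.
Proof. exact/same_historyP. Qed.

Lemma same_history_sym i s t : same_history i s t = same_history i t s.
Proof. by apply/same_historyP/same_historyP => H k /H. Qed.

Lemma same_history_trans i s1 s2 s3 :
  same_history i s1 s2 -> same_history i s2 s3 -> same_history i s1 s3.
Proof. by move=> /same_historyP H12 /same_historyP H23; apply/same_historyP => k k_lt; rewrite H12 ?H23. Qed.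

Lemma same_history_class i s t : same_history i s t -> same_history i s =1 same_history i t.
Proof.
move=> st t'; apply/idP/idP; last exact: same_history_trans.
by apply: same_history_trans; rewrite same_history_sym.
Qed.

Lemma NspP x : Nsp x <-> forall i s t, same_history i s t -> x s ord0 i = x t ord0 i.
Proof. by split=> [H i s t /same_historyP | H s t i /same_historyP]; [apply: H | apply: H]. Qed.

Lemma Nsp0 : Nsp 0.
Proof. by apply/NspP => i s t _; rewrite !ffunE !mxE. Qed.

Lemma NspD x y : Nsp x -> Nsp y -> Nsp (x + y).
Proof. by move=> /NspP Nx /NspP Ny; apply/NspP => i s t st; rewrite !ffunE !mxE (Nx _ _ _ st) (Ny _ _ _ st). Qed.

Lemma NspZ a x : Nsp x -> Nsp (a *: x).
Proof. by move=> /NspP Nx; apply/NspP => i s t st; rewrite !ffunE !mxE (Nx _ _ _ st). Qed.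

Lemma NspB x y : Nsp x -> Nsp y -> Nsp (x - y).
Proof. by move=> Nx Ny; rewrite -scaleN1r; apply/NspD/NspZ. Qed.

Lemma Msp0 : Msp 0.
Proof. by move=> z _; rewrite ipL0l. Qed.

Lemma MspD x y : Msp x -> Msp y -> Msp (x + y).
Proof. by move=> Mx My z Nz; rewrite ipLDl Mx // My // addr0. Qed.

Lemma MspZ a x : Msp x -> Msp (a *: x).
Proof. by move=> Mx z Nz; rewrite ipLZl Mx // mulr0. Qed.

Lemma MspN x : Msp x -> Msp (- x).
Proof. by rewrite -scaleN1r; apply: MspZ. Qed.

Lemma MspB x y : Msp x -> Msp y -> Msp (x - y).
Proof. by move=> Mx My; apply/MspD/MspN. Qed.

Lemma ipL_Nsp_Msp u v : Nsp u -> Msp v -> ip u v = 0.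
Proof. by move=> Nu Mv; rewrite ipLC Mv. Qed.

Lemma ipL_Nsp_Msp_sum u v u' v' : Nsp u -> Msp v -> Nsp u' -> Msp v' ->
  ip (u + v) (u' + v') = ip u u' + ip v v'.
Proof.
move=> Nu Mv Nu' Mv'; rewrite ipLDl !ipLDr (ipL_Nsp_Msp Nu Mv') (ipLC v u').
by rewrite (ipL_Nsp_Msp Nu' Mv) addr0 add0r.
Qed.

(* [PN] is the conditional expectation of each coordinate [i] given the history
   [xi_k, k < stage i]; [history_mass i s] is the probability of the history of [s]. *)
Definition history_mass i s := \sum_(t | same_history i s t) p t.

Definition cond_exp x : Ln :=
  [ffun s => \row_i ((\sum_(t | same_history i s t) p t * x t ord0 i) / history_mass i s)].

Lemma history_mass_gt0 i s : 0 < history_mass i s.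
Proof.
rewrite /history_mass (bigD1 s) ?same_history_refl //= ltr_pwDl //.
by rewrite sumr_ge0 // => t _; rewrite ltW.
Qed.

Lemma history_mass_class i s t : same_history i s t -> history_mass i s = history_mass i t.
Proof. by move=> st; rewrite /history_mass (eq_bigl _ _ (same_history_class st)). Qed.

Lemma cond_exp_Nsp x : Nsp (cond_exp x).
Proof.
apply/NspP => i s t st; rewrite !ffunE !mxE (history_mass_class st).
by rewrite (eq_bigl _ _ (same_history_class st)).
Qed.

Lemma ipL_componentwise y z :
  ip y z = \sum_(i < n) \sum_s p s * (y s ord0 i * z s ord0 i).
Proof. by rewrite exchange_big; apply: eq_bigr => s _; rewrite mulr_sumr. Qed.

Lemma cond_exp_orth x z : Nsp z -> ip (x - cond_exp x) z = 0.
Proof.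
move/NspP=> Nz; apply/eqP; rewrite ipLBl subr_eq0 eq_sym; apply/eqP.
rewrite !ipL_componentwise; apply: eq_bigr => i _.
pose q t := p t * (x t ord0 i * z t ord0 i) / history_mass i t.
have mass_neq0 t : history_mass i t != 0 by rewrite gt_eqF ?history_mass_gt0.
transitivity (\sum_s \sum_(t | same_history i s t) p s * q t).
  apply: eq_bigr => s _; rewrite ffunE mxE !mulr_suml mulr_sumr.
  apply: eq_bigr => t st; rewrite /q (Nz _ _ _ st) (history_mass_class st).
  by field; apply: mass_neq0.
under eq_bigr do rewrite big_mkcond /=.
rewrite exchange_big /=; apply: eq_bigr => t _.
rewrite -big_mkcond /= -mulr_suml.
have -> : \sum_(s | same_history i s t) p s = history_mass i t.
  by apply: eq_bigl => s; rewrite same_history_sym.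
by rewrite /q; field; apply: mass_neq0.
Qed.

(* Locked copies of [PN] and [PM]: otherwise unification unfolds the [xget]
   inside [oproj] whenever it compares two different projections. *)
Definition projN : Ln -> Ln := locked (PN p sc stage).
Definition projM : Ln -> Ln := locked (PM p sc stage).

Lemma PN_projN : PN p sc stage = projN.
Proof. by rewrite /projN -lock. Qed.

Lemma PM_projM : PM p sc stage = projM.
Proof. by rewrite /projM -lock. Qed.

Lemma projN_cond_exp x : projN x = cond_exp x.
Proof.
rewrite -PN_projN; apply: oproj_eq p_gt0 _ _ _ _ (cond_exp_Nsp x) (@cond_exp_orth x).
exact: NspB.
Qed.

Lemma projN_Nsp x : Nsp (projN x).
Proof. by rewrite projN_cond_exp; apply: cond_exp_Nsp. Qed.

Lemma projM_sub x : projM x = x - projN x.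
Proof.
rewrite -PM_projM; apply: oproj_eq p_gt0 _ _ _ _ _ _ => [u v|z Nz|z Mz]; first exact: MspB.
  by rewrite projN_cond_exp; apply: cond_exp_orth.
by rewrite opprB addrC subrK (ipL_Nsp_Msp (projN_Nsp x) Mz).
Qed.

Lemma projM_Msp x : Msp (projM x).
Proof. by rewrite projM_sub projN_cond_exp => z; apply: cond_exp_orth. Qed.

Lemma projN_add_projM x : projN x + projM x = x.
Proof. by rewrite projM_sub addrC subrK. Qed.

Lemma projN_sum u v : Nsp u -> Msp v -> projN (u + v) = u.
Proof.
move=> Nu Mv; rewrite -PN_projN; apply: oproj_eq p_gt0 _ _ _ _ Nu _ => [u' v'|z Nz]; first exact: NspB.
by rewrite addrC addKr Mv.
Qed.

Lemma projM_sum u v : Nsp u -> Msp v -> projM (u + v) = v.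
Proof. by move=> Nu Mv; rewrite projM_sub projN_sum // addrC addKr. Qed.

Local Hint Resolve Nsp0 Msp0 projN_Nsp projM_Msp : core.

Lemma projN0 : projN 0 = 0.
Proof. by have := projN_sum Nsp0 Msp0; rewrite addr0. Qed.

Lemma projM0 : projM 0 = 0.
Proof. by have := projM_sum Nsp0 Msp0; rewrite addr0. Qed.

Lemma projNB x y : projN (x - y) = projN x - projN y.
Proof.
rewrite -{1}(projN_add_projM x) -{1}(projN_add_projM y) opprD addrACA.
by rewrite projN_sum //; [apply: NspB | apply: MspB].
Qed.

Lemma projMB x y : projM (x - y) = projM x - projM y.
Proof.
rewrite -{1}(projN_add_projM x) -{1}(projN_add_projM y) opprD addrACA.
by rewrite projM_sum //; [apply: NspB | apply: MspB].
Qed.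

Lemma ipL_projN_projM x y : ip x y = ip (projN x) (projN y) + ip (projM x) (projM y).
Proof. by rewrite -{1}(projN_add_projM x) -{1}(projN_add_projM y) ipL_Nsp_Msp_sum. Qed.

Lemma AopE a u : Aop p sc stage a u = projN u + a *: projM u.
Proof. by rewrite /Aop PN_projN PM_projM. Qed.

Lemma projN_Aop a u : projN (Aop p sc stage a u) = projN u.
Proof. by rewrite AopE projN_sum //; apply: MspZ. Qed.

Lemma projM_Aop a u : projM (Aop p sc stage a u) = a *: projM u.
Proof. by rewrite AopE projM_sum //; apply: MspZ. Qed.

Lemma ipL_Aop a u v : ip (Aop p sc stage a u) v = ip u (Aop p sc stage a v).
Proof. by rewrite ipL_projN_projM (ipL_projN_projM u) !projN_Aop !projM_Aop ipLZl ipLZr. Qed.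

Lemma AopB a u v : Aop p sc stage a (u - v) = Aop p sc stage a u - Aop p sc stage a v.
Proof. by rewrite !AopE projNB projMB scalerBr opprD addrACA. Qed.

Variables (F : S -> 'rV[R]_n -> 'rV[R]_n) (C : S -> set 'rV[R]_n) (r : R).
Hypothesis F_mono : forall s, monotone_map (F s).
Hypothesis r_gt0 : 0 < r.
Local Notation Ccal := (@Ccal R S n C).
Local Notation Fcal := (@Fcal R S n F).
Local Notation A := (Aop p sc stage r).
Local Notation T := (Trel p sc stage F C).
Local Notation ATA := (ATA p sc stage F C r).

Lemma Fcal_mono u v : 0 <= ip (Fcal u - Fcal v) (u - v).
Proof.
apply: sumr_ge0 => s _; apply: mulr_ge0; first exact/ltW.
by rewrite !ffunE; apply: F_mono.
Qed.

Lemma normal_cone_mono (K : set Ln) u v g h :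
  normal_cone ip K u g -> normal_cone ip K v h -> 0 <= ip (g - h) (u - v).
Proof.
move=> [Ku g_normal] [Kv h_normal].
have := g_normal v Kv; have := h_normal u Ku.
by rewrite -[v - u]opprB ipLNr ipLBl; lra.
Qed.

Lemma normal_cone_Ccal u g :
  normal_cone ip Ccal u g <-> forall s, normal_cone dotv (C s) (u s) (g s).
Proof.
split=> [[Cu g_normal] s | pointwise].
  split=> [|c Cc]; first exact: Cu.
  pose y : Ln := [ffun t => if t == s then c else u t].
  have Cy : Ccal y by move=> t; rewrite ffunE; case: eqP => [->|_]; [exact: Cc | exact: Cu].
  have := g_normal y Cy; rewrite /ipL (bigD1 s) //= big1 => [|t /negbTE ts].
    by rewrite addr0 !ffunE eqxx pmulr_rle0.
  by rewrite !ffunE ts subrr dotv0r mulr0.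
split=> [s|y Cy]; first by case: (pointwise s).
apply: sumr_le0 => s _; apply: mulr_ge0_le0; first exact/ltW.
by rewrite !ffunE; case: (pointwise s) => _; apply; apply: Cy.
Qed.

Lemma normal_cone_Fcal_mono u u' g g' :
  normal_cone ip Ccal u (g - Fcal u) -> normal_cone ip Ccal u' (g' - Fcal u') ->
  0 <= ip (g - g') (u - u').
Proof.
move=> Hu Hu'; have := normal_cone_mono Hu Hu'; have := Fcal_mono u u'.
by rewrite !ipLBl; lra.
Qed.

Lemma Trel_mono y z y' z' : T y z -> T y' z' -> 0 <= ip (z - z') (y - y').
Proof.
move=> Tz Tz'; have := normal_cone_Fcal_mono Tz Tz'; rewrite PN_projN PM_projM.
rewrite !(ipL_projN_projM (_ - _)) !projNB !projMB !projN_sum // !projM_sum //.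
by rewrite (ipLC (projM y - _)).
Qed.

Lemma ATA_mono y v y' v' : ATA y v -> ATA y' v' -> 0 <= ip (v - v') (y - y').
Proof. by move=> [z [Tz ->]] [z' [Tz' ->]]; rewrite -AopB ipL_Aop AopB; apply: Trel_mono. Qed.

Lemma ATA_of_normal_cone y v :
  normal_cone ip Ccal (projN y + r^-1 *: projM v)
    (projN v + r *: projM y - Fcal (projN y + r^-1 *: projM v)) ->
  ATA y v.
Proof.
move=> cone; exists (Aop p sc stage r^-1 v); split.
  by rewrite /Trel /= PN_projN PM_projM !projN_Aop !projM_Aop.
rewrite {1}AopE projN_Aop projM_Aop scalerA mulfV ?gt_eqF // scale1r.
by rewrite projN_add_projM.
Qed.

Lemma ATA_of_IPHA_step (xk wk xhk whk : Ln) : Nsp xk -> Msp wk ->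
  (forall s, normal_cone dotv (C s) (whk s) (r *: (xk s - xhk s) - wk s - F s (whk s))) ->
  ATA (xk - r^-1 *: wk - (xk - projN whk + projM xhk)) (r *: (xk - projN xhk + projM whk)).
Proof.
move=> Nx Mw cone.
have -> : xk - r^-1 *: wk - (xk - projN whk + projM xhk) =
    projN whk + (- (r^-1 *: wk) - projM xhk).
  by move: (projN whk) (projM xhk) => c d; ffun_row_ring.
rewrite scalerDr; apply: ATA_of_normal_cone.
have My : Msp (- (r^-1 *: wk) - projM xhk) by apply/MspB/projM_Msp/MspN/MspZ.
have Nv : Nsp (r *: (xk - projN xhk)) by apply/NspZ/NspB.
have Mv : Msp (r *: projM whk) by apply/MspZ.
rewrite !projN_sum // !projM_sum // scalerA mulVf ?gt_eqF // scale1r projN_add_projM.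
apply/normal_cone_Ccal => s; rewrite projM_sub.
suff -> : (r *: (xk - projN xhk) + r *: (- (r^-1 *: wk) - (xhk - projN xhk)) - Fcal whk) s =
    r *: (xk s - xhk s) - wk s - F s (whk s) by apply: cone.
move: (projN xhk) => c; apply/rowP => j; rewrite /Fcal !ffunE !mxE.
by field; rewrite gt_eqF.
Qed.

Lemma SVI_solution_of_ATA_zero (zs : Ln) : ATA zs 0 ->
  SVI_solution p sc stage F C (projN zs) (- (r *: projM zs)).
Proof.
move=> [z [Tz z0]].
have Nz : projN z = 0 by rewrite -(projN_Aop r) -z0 projN0.
have Mz : projM z = 0.
  have /esym/eqP := congr1 projM z0.
  by rewrite projM0 projM_Aop scaler_eq0 gt_eqF //= => /eqP.
split; first exact: projN_Nsp.
split; first by apply/MspN/MspZ.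
move: Tz; rewrite /Trel /= PN_projN PM_projM projN_Aop projM_Aop Nz Mz addr0 add0r.
move=> /normal_cone_Ccal cone s.
suff -> : - F s (projN zs s) - (- (r *: projM zs)) s = (r *: projM zs - Fcal (projN zs)) s.
  exact: cone.
by rewrite /Fcal !ffunE opprK addrC.
Qed.

Lemma normMr_Nsp_Msp (X W zs : Ln) : Nsp X -> Msp W ->
  normMr p r (X - projN zs) (W - - (r *: projM zs)) =
  Num.sqrt (ip (X - r^-1 *: W - zs) (X - r^-1 *: W - zs)).
Proof.
move=> NX MW.
have Na : Nsp (X - projN zs) by apply: NspB.
have Mb : Msp ((- r^-1) *: (W - - (r *: projM zs))) by apply/MspZ/MspB/MspN/MspZ.
have -> : X - r^-1 *: W - zs = (X - projN zs) + (- r^-1) *: (W - - (r *: projM zs)).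
  rewrite -{1}(projN_add_projM zs); move: (projN zs) (projM zs) => c d.
  by apply/ffunP => s; apply/rowP => j; rewrite !ffunE !mxE; field; rewrite gt_eqF.
rewrite /normMr !(normL_sqr p_gt0) [in RHS]ipL_Nsp_Msp_sum //.
by rewrite ipLZl ipLZr mulrA mulrNN -expr2 exprVn.
Qed.

Variables (sigbar theta : R) (sigma tau : nat -> R) (x w xh wh : nat -> Ln).
Hypothesis run : IPHA_run p sc stage F C r sigbar theta sigma tau x w xh wh.

Local Notation a_ k := (x k - projN (xh k) + projM (wh k)).
Local Notation b_ k := (x k - projN (wh k) + projM (xh k)).

Lemma IPHA_Nsp_Msp k : Nsp (x k) /\ Msp (w k).
Proof.
have [Nx0 [Mw0 [_ [_ step]]]] := run.
elim: k => [//|k [Nx Mw]].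
have [_ [_ [_ [_ [_ [-> ->]]]]]] := step k; rewrite !PN_projN !PM_projM.
by split; [apply/NspB/NspZ/NspB | apply/MspD/MspZ].
Qed.

Variable zs : Ln.
Hypothesis zs_zero : ATA zs 0.

Local Notation err k := (x k - r^-1 *: w k - zs).

Lemma IPHA_descent k :
  ip (err k.+1) (err k.+1) <=
  ip (err k) (err k) - descent_rate theta sigbar * (ip (a_ k) (a_ k) + ip (b_ k) (b_ k)).
Proof.
have [Nx Mw] := IPHA_Nsp_Msp k.
have [_ [_ [/andP [_ sb1] [th01 /(_ k) step]]]] := run.
have [sig_k [cone [inexact [b0 [tau_k [x_next w_next]]]]]] := step.
rewrite !PN_projN !PM_projM in inexact b0 x_next w_next.
have ab_le : ip (a_ k) (b_ k) <= ip (a_ k) (err k).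
  have := ATA_mono (ATA_of_IPHA_step Nx Mw cone) zs_zero.
  by rewrite (addrAC _ (- b_ k)) subr0 ipLZl pmulr_rge0 // => ?; rewrite -subr_ge0 -ipLBr.
have -> : err k.+1 = err k - (tau k * (ip (a_ k) (b_ k) / normL p (a_ k) ^+ 2)) *: a_ k.
  rewrite x_next w_next; move: (projN (xh k)) (projM (wh k)) (tau k * _) => c d t.
  by apply/ffunP => s; apply/rowP => j; rewrite !ffunE !mxE; field; rewrite gt_eqF.
have inexact' : ip (a_ k - b_ k) (a_ k - b_ k) <=
    sigma k ^+ 2 * (ip (a_ k) (a_ k) + ip (b_ k) (b_ k)).
  have -> : a_ k - b_ k = wh k - xh k.
    rewrite (projM_sub (wh k)) (projM_sub (xh k)).
    by move: (projN (wh k)) (projN (xh k)) => c d; ffun_row_ring.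
  by rewrite -!(normL_sqr p_gt0).
exact (relaxed_step_descent p_gt0 b0 ab_le inexact' sig_k sb1 th01 tau_k).
Qed.

Lemma IPHA_err_le_err0 k : ip (err k) (err k) <= ip (err 0%N) (err 0%N).
Proof.
have [_ [_ [sb01 [th01 _]]]] := run.
elim: k => [//|k IHk]; apply: le_trans IHk; apply: le_trans (IPHA_descent k) _.
rewrite gerBl mulr_ge0 ?addr_ge0 ?(ipL_ge0 p_gt0) //.
exact/ltW/descent_rate_gt0.
Qed.

Lemma IPHA_error_bound L eta : 0 < eta ->
  (forall v z, ATAinv p sc stage F C r v z -> normL p v <= eta ->
    normL p (z - zs) <= L * normL p v) ->
  exists2 K, descent_rate theta sigbar < K &
    forall k, ip (err k) (err k) <= K * (ip (a_ k) (a_ k) + ip (b_ k) (b_ k)).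
Proof.
move=> eta0 lip; have [_ [_ [sb01 [th01 step]]]] := run.
exists (2 * L ^+ 2 * r ^+ 2 + 2 + r ^+ 2 * ip (err 0%N) (err 0%N) / eta ^+ 2).
  have := descent_rate_lt1 th01 sb01.
  have := sqr_ge0 (L * r); have := divr_ge0 (mulr_ge0 (sqr_ge0 r) (ipL_ge0 p_gt0 (err 0%N))) (sqr_ge0 eta).
  rewrite exprMn; nra.
move=> k; have [Nx Mw] := IPHA_Nsp_Msp k.
have [_ [cone _]] := step k.
refine (local_error_bound p_gt0 eta0 (IPHA_err_le_err0 k) _) => near.
by have := lip _ _ (ATA_of_IPHA_step Nx Mw cone) near; rewrite (addrAC _ (- b_ k)).
Qed.

End ExtensiveForm.

Theorem corollary2 (R : realType) (S : finType) (n N : nat) (Om : eqType)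
  (p : S -> R) (sc : S -> 'I_N -> Om) (stage : 'I_n -> 'I_N)
  (C : S -> set 'rV[R]_n) (F : S -> 'rV[R]_n -> 'rV[R]_n) (r : R)
  (sigbar theta : R) (sigma tau : nat -> R)
  (x w xh wh : nat -> @Ln R S n) :
  injective sc ->
  {homo stage : i j / (i <= j)%N} ->
  (forall s, 0 < p s) -> \sum_s p s = 1 ->
  (forall s, exists c, C s c) -> (forall s, closed (C s)) ->
  (forall s, is_convex (C s)) ->
  (forall s, continuous (F s)) -> (forall s, monotone_map (F s)) ->
  0 < r ->
  lipschitz_at_zero p (ATAinv p sc stage F C r) ->
  IPHA_run p sc stage F C r sigbar theta sigma tau x w xh wh ->
  exists xs ws : @Ln R S n,
    SVI_solution p sc stage F C xs ws /\
    (fun k => normMr p r (x k - xs) (w k - ws)) @ \oo --> 0 /\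
    exists (c : R) (k0 : nat), 0 < c < 1 /\
      forall k, (k0 <= k)%N ->
        normMr p r (x k.+1 - xs) (w k.+1 - ws) <= c * normMr p r (x k - xs) (w k - ws).
Proof.
(* The remaining hypotheses make the IPHA well defined and [ATA] maximal monotone; here
   the iterates come with [IPHA_run] and the zero of [ATA] with [lipschitz_at_zero]. *)
move=> _ _ p_gt0 _ _ _ _ _ F_mono r_gt0 [zs [zs_unique [L [eta [_ [eta0 lip]]]]]] run.
have zs_zero : ATA p sc stage F C r zs 0 by apply/zs_unique.
exists (projN p sc stage zs), (- (r *: projM p sc stage zs)).
split; first exact: SVI_solution_of_ATA_zero.
have err_norm k : normMr p r (x k - projN p sc stage zs) (w k - - (r *: projM p sc stage zs)) =
    Num.sqrt (ipL p (x k - r^-1 *: w k - zs) (x k - r^-1 *: w k - zs)).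
  by have [Nx Mw] := IPHA_Nsp_Msp p_gt0 run k; apply: normMr_Nsp_Msp.
have [K rho_lt_K bound] := IPHA_error_bound p_gt0 F_mono r_gt0 run zs_zero eta0 lip.
have [|cvg0 [c [c01 rate]]] := linear_rate_of_descent _ (fun k => ipL_ge0 p_gt0 _)
  (IPHA_descent p_gt0 F_mono r_gt0 run zs_zero) bound.
  by have [_ [_ [sb01 [th01 _]]]] := run; rewrite descent_rate_gt0.
split; first by under eq_fun do rewrite err_norm.
by exists c, 0%N; split=> // k _; rewrite !err_norm.
Qed.
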